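(* Let $\theta\in\mathrm{Irr}(N)$, let $N\le L\le\mathrm{Stab}_G(\tilde\theta)$ and $N\le K\le\mathrm{Stab}_G(\theta)$ with $L$ normalising $K$, and let $\hat\theta$ be a strong extension of $\theta$ to $K$. Let $g\in L$ and suppose $\psi_g,\psi'_g\in\mathrm{Lin}(G)$ both satisfy ${}^g\theta=\theta\psi_g|_N=\theta\psi'_g|_N$, and that $\mu,\mu'\in F_K$ satisfy ${}^g\hat\theta=\hat\theta\,\psi_g|_K\,\mu=\hat\theta\,\psi'_g|_K\,\mu'$. Then $\mu\Gamma_{K,\tilde\theta}=\mu'\Gamma_{K,\tilde\theta}$; that is, the coset $\mu(gN)\Gamma_{K,\tilde\theta}$ is independent of the choice of $\psi_g|_K$.
   Context: $G$ is a profinite group, $N$ an open normal subgroup; $\mathrm{Irr}$, $\mathrm{Lin}$ denote continuous irreducible, resp. degree-one, complex characters; $\tilde\theta=\{\theta\psi|_N:\psi\in\mathrm{Lin}(G)\}$ is the $G$-twist class of $\theta$, with $G$ acting by conjugation ${}^g\theta(n)=\theta(g^{-1}ng)$. A projective representation of $K$ is $\Pi:K\to\mathrm{GL}_m(\mathbb{C})$ with $\Pi(x)\Pi(y)=\alpha(x,y)\Pi(xy)$ ($\alpha$ the factor set); its projective character is $\mathrm{Tr}\circ\Pi$. A strong extension of $\theta$ to $K$ (with $K$ fixing $\theta$) is the projective character of a projective representation $\Pi$ of $K$ with $\Pi(xn)=\Pi(x)\Theta(n)$, $\Pi(nx)=\Theta(n)\Pi(x)$ ($x\in K,n\in N$)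 for a representation $\Theta$ affording $\theta$. $F_K$ is the group of functions $K/N\to\mathbb{C}^\times$ (viewed as functions on $K$ constant on $N$-cosets) under pointwise multiplication; ${}^gf(x)=f(g^{-1}xg)$. $\mathrm{Lin}(K/N)$ is the set of degree-one characters of $K$ trivial on $N$, and $\Gamma_{K,\tilde\theta}=\{\nu\in\mathrm{Lin}(K/N):\hat\theta\,\varepsilon|_K=\hat\theta\,\nu\text{ for some }\varepsilon\in\mathrm{Lin}(G)\}$ (independent of the choice of $\theta\in\tilde\theta$ and of $\hat\theta$). *)

From HB Require Import structures.
From mathcomp Require Import all_boot all_order all_algebra.
From mathcomp Require Import all_classical all_reals all_analysis.
From mathcomp Require Import complex Rstruct Rstruct_topology.
Set Implicit Arguments. Unset Strict Implicit. Unset Printing Implicit Defensive.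
Import Order.TTheory GRing.Theory Num.Theory.
Local Open Scope classical_set_scope.
Local Open Scope ring_scope.

HB.structure Definition TopGroup := {G of Group G & Topological G}.

Definition CC : numClosedFieldType := complex Rdefinitions.R.

Definition profinite (G : TopGroup.type) : Prop :=
  continuous (fun p : G * G => (p.1 * p.2)%g) /\
  continuous (fun x : G => (x^-1)%g) /\
  compact [set: G] /\ hausdorff_space G /\ totally_disconnected [set: G].

Section Defs.
Variable G : TopGroup.type.

Definition conjg' (x g : G) : G := (g^-1 * x * g)%g.

Definition is_subgroup (H : set G) : Prop :=
  H 1%g /\ (forall x y, H x -> H y -> H (x * y)%g) /\ (forall x, H x -> H (x^-1)%g).

Definition open_normal (N : set G) : Prop :=
  is_subgroup N /\ open N /\ (forall g n, N n -> N (conjg' n g)).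

Definition cont_on (A : set G) (f : G -> CC) : Prop :=
  forall x, A x -> forall e : CC, 0 < e ->
    exists U : set G, open U /\ U x /\ (forall y, U y -> A y -> `|f y - f x| < e).

(* a (matrix) representation of the subgroup H of degree m (values outside H
   are irrelevant) *)
Definition rep_of (H : set G) (m : nat) (Th : G -> 'M[CC]_m) : Prop :=
  Th 1%g = 1%:M /\ (forall x y, H x -> H y -> Th (x * y)%g = Th x *m Th y).

Definition cont_rep (H : set G) (m : nat) (Th : G -> 'M[CC]_m) : Prop :=
  forall i j, cont_on H (fun x => Th x i j).

Definition irr_rep (H : set G) (m : nat) (Th : G -> 'M[CC]_m) : Prop :=
  (0 < m)%N /\
  forall k (U : 'M[CC]_(k, m)), (forall x, H x -> (U *m Th x <= U)%MS) ->
    \rank U = 0%N \/ \rank U = m.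

Definition affords (H : set G) (m : nat) (Th : G -> 'M[CC]_m) (chi : G -> CC) :=
  forall x, H x -> chi x = \tr (Th x).

Definition is_Irr (H : set G) (theta : G -> CC) : Prop :=
  exists m (Th : G -> 'M[CC]_m),
    [/\ rep_of H Th, cont_rep H Th, irr_rep H Th & affords H Th theta].

Definition is_Lin (H : set G) (psi : G -> CC) : Prop :=
  exists Th : G -> 'M[CC]_1,
    [/\ rep_of H Th, cont_rep H Th & affords H Th psi].

Definition is_Lin_quot (N K : set G) (nu : G -> CC) : Prop :=
  is_Lin K nu /\ (forall n, N n -> nu n = 1).

Definition stab (N : set G) (theta : G -> CC) (g : G) : Prop :=
  forall n, N n -> theta (conjg' n g) = theta n.

(* Stab_G(theta~), theta~ = {theta psi|_N : psi \in Lin(G)}, with G acting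
   by conjugation; g stabilises the set theta~ (functions compared on N) *)
Definition stab_twist (N : set G) (theta : G -> CC) (g : G) : Prop :=
  (forall psi, is_Lin setT psi -> exists psi', is_Lin setT psi' /\
     forall n, N n -> theta (conjg' n g) * psi (conjg' n g) = theta n * psi' n) /\
  (forall psi', is_Lin setT psi' -> exists psi, is_Lin setT psi /\
     forall n, N n -> theta (conjg' n g) * psi (conjg' n g) = theta n * psi' n).

Definition strong_ext (N K : set G) (theta thetah : G -> CC) : Prop :=
  exists m (Th : G -> 'M[CC]_m) (Pi : G -> 'M[CC]_m) (alpha : G -> G -> CC),
  [/\ rep_of N Th /\ affords N Th theta,
      (forall x, K x -> Pi x \in unitmx),
      (forall x y, K x -> K y -> Pi x *m Pi y = alpha x y *: Pi (x * y)%g),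
      (forall x n, K x -> N n ->
          Pi (x * n)%g = Pi x *m Th n /\ Pi (n * x)%g = Th n *m Pi x)
    & affords K Pi thetah].

(* F_K: functions K/N -> C^x, viewed as functions on K constant on N-cosets *)
Definition in_FK (N K : set G) (mu : G -> CC) : Prop :=
  (forall x, K x -> mu x != 0) /\ (forall x n, K x -> N n -> mu (x * n)%g = mu x).

(* Gamma_{K, theta~} (defined through the given thetah) *)
Definition Gamma (N K : set G) (thetah nu : G -> CC) : Prop :=
  is_Lin_quot N K nu /\
  exists eps, is_Lin setT eps /\ forall x, K x -> thetah x * eps x = thetah x * nu x.

End Defs.

(* Put lam := psi' / psi and f := mu / mu'.  The hypotheses give theta lam = theta
   on N and thetah lam = thetah f on K, and once f is known to be a linear
   character of K/N, nu |-> f nu maps Gamma into itself (with eps |-> eps lam),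
   which gives mu Gamma = mu' Gamma.  As thetah may vanish, multiplicativity of f
   is the real point.  By Burnside's theorem the irreducible Theta(N) spans all
   matrices, and so does the representation underlying thetah, which has the
   same character; hence the trace pairing against Theta(N) is nondegenerate.
   Since theta lam = theta, the twist sum c_n Theta(n) |-> sum c_n lam(n) Theta(n)
   is well defined and multiplicative, and the trace pairing shows that it
   multiplies Pi(x) by lam(x) / f(x).  Comparing with Pi(x) Pi(y) =
   alpha(x, y) Pi(xy) makes lam / f, hence f, multiplicative on K. *)

From HB Require Import structures.
From mathcomp Require Import all_boot all_order all_algebra.
From mathcomp Require Import all_classical all_reals all_analysis.
From mathcomp Require Import complex Rstruct Rstruct_topology.
Import Order.TTheory GRing.Theory Num.Theory.
Local Open Scope classical_set_scope.
Local Open Scope ring_scope.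
From mathcomp Require Import zify ring.
Import numFieldTopology.Exports numFieldNormedType.Exports.

Set Implicit Arguments. Unset Strict Implicit. Unset Printing Implicit Defensive.

Section SubspaceRowspace.
Variables (F : fieldType) (k : nat) (Q : 'rV[F]_k -> Prop).
Hypotheses (Q0 : Q 0) (QD : forall u v, Q u -> Q v -> Q (u + v))
  (QZ : forall a u, Q u -> Q (a *: u)).

Lemma rowspace_sub_subspace n (U : 'M[F]_(n, k)) :
  (forall i, Q (row i U)) -> forall v, (v <= U)%MS -> Q v.
Proof.
move=> QU v /submxP [x ->]; rewrite mulmx_sum_row.
by apply: (big_ind Q) => // i _; apply: QZ.
Qed.

Lemma subspace_rowspace : exists n (U : 'M[F]_(n, k)), forall v, Q v <-> (v <= U)%MS.
Proof.
have grow d n (U : 'M[F]_(n, k)) : (forall i, Q (row i U)) -> (k - \rank U <= d)%N ->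
    exists n' (U' : 'M[F]_(n', k)),
      (forall i, Q (row i U')) /\ (forall v, Q v -> (v <= U')%MS).
  elim: d n U => [|d IH] n U QU rkU.
    exists n, U; split=> // v _; apply: submx_full.
    by rewrite /row_full eqn_leq rank_leq_col /=; move: rkU; rewrite leqn0 subn_eq0.
  have [sQU|/existsPNP [v Qv /negP vU]] := pselect (forall v, Q v -> (v <= U)%MS).
    by exists n, U.
  have ltUv : (\rank U < \rank (col_mx U v))%N.
    have sU : (U <= col_mx U v)%MS by rewrite -addsmxE addsmxSl.
    rewrite ltn_neqAle; have [-> ->] := mxrank_leqif_sup sU.
    by rewrite andbT col_mx_sub submx_refl.
  apply: (IH _ (col_mx U v)).
    move=> i; rewrite -(splitK i); case: (fintype.split i) => j /=.
      by rewrite rowKu.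
    by rewrite rowKd (_ : row j v = v) //; apply/rowP => l; rewrite mxE ord1.
  by have := rank_leq_col (col_mx U v); lia.
have rows0 (i : 'I_0) : Q (row i (0 : 'M[F]_(0, k))) by rewrite row0.
have [n [U [QU sQU]]] := grow k 0%N 0 rows0 (leq_subr _ _).
by exists n, U => v; split; [apply: sQU | apply: rowspace_sub_subspace].
Qed.

End SubspaceRowspace.

Section LinearSpan.
Variables (F : fieldType) (G : groupType) (N : set G) (m : nat) (Th : G -> 'M[F]_m).

Definition lcomb (s : seq (F * G)) : 'M[F]_m := \sum_(p <- s) p.1 *: Th p.2.
Definition supported (s : seq (F * G)) := forall p, p \in s -> N p.2.
Definition in_span (M : 'M[F]_m) := exists2 s, supported s & M = lcomb s.

Lemma span0 : in_span 0.
Proof. by exists [::]; rewrite // /lcomb big_nil. Qed.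

Lemma spanD A B : in_span A -> in_span B -> in_span (A + B).
Proof.
move=> [s Ns ->] [t Nt ->]; exists (s ++ t); last by rewrite /lcomb big_cat.
by move=> p; rewrite mem_cat => /orP [/Ns|/Nt].
Qed.

Lemma spanZ a A : in_span A -> in_span (a *: A).
Proof.
move=> [s Ns ->]; exists [seq (a * p.1, p.2) | p <- s].
  by move=> p /mapP [q /Ns Nq ->].
by rewrite /lcomb big_map scaler_sumr; apply: eq_bigr => p _; rewrite scalerA.
Qed.

Lemma spanB A B : in_span A -> in_span B -> in_span (A - B).
Proof. by move=> SA SB; apply: spanD => //; rewrite -scaleN1r; apply: spanZ. Qed.

Lemma span_mem x : N x -> in_span (Th x).
Proof.
move=> Nx; exists [:: (1, x)]; first by move=> p; rewrite inE => /eqP ->.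
by rewrite /lcomb big_seq1 scale1r.
Qed.

Lemma span_sum (J : finType) (A : J -> 'M[F]_m) :
  (forall j, in_span (A j)) -> in_span (\sum_j A j).
Proof. by move=> SA; apply: (big_ind in_span) => //; [apply: span0 | apply: spanD]. Qed.

Definition prod_terms (s t : seq (F * G)) :=
  [seq (p.1 * q.1, (p.2 * q.2)%g) | p <- s, q <- t].

Hypotheses (NM : forall x y, N x -> N y -> N (x * y)%g)
  (ThM : forall x y, N x -> N y -> Th (x * y)%g = Th x *m Th y).

Lemma supported_prod s t : supported s -> supported t -> supported (prod_terms s t).
Proof. by move=> Ns Nt _ /allpairsP [[p q] [/= /Ns Np /Nt Nq ->]]; apply: NM. Qed.

Lemma lcomb_prod s t : supported s -> supported t ->
  lcomb (prod_terms s t) = lcomb s *m lcomb t.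
Proof.
move=> Ns Nt; rewrite /lcomb big_allpairs_dep mulmx_suml; apply: eq_big_seq => p /Ns Np.
rewrite mulmx_sumr; apply: eq_big_seq => q /Nt Nq /=.
by rewrite ThM // -scalemxAl -scalemxAr scalerA.
Qed.

Lemma spanM A B : in_span A -> in_span B -> in_span (A *m B).
Proof.
move=> [s Ns ->] [t Nt ->]; exists (prod_terms s t); first exact: supported_prod.
by rewrite lcomb_prod.
Qed.

End LinearSpan.

Lemma eigenvector_exists (F : closedFieldType) n (M : 'M[F]_n) : (0 < n)%N ->
  exists c (z : 'rV_n), z != 0 /\ z *m M = c *: z.
Proof.
move=> n_gt0; have : size (char_poly M) != 1%N by rewrite size_char_poly; lia.
move=> /closed_rootP [c]; rewrite -eigenvalue_root_char => /eigenvalueP [z ez nz].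
by exists c, z.
Qed.

Section Burnside.
Variables (F : closedFieldType) (G : groupType) (N : set G) (m : nat) (Th : G -> 'M[F]_m).
Hypotheses (N1 : N 1%g) (NM : forall x y, N x -> N y -> N (x * y)%g).
Hypotheses (Th1 : Th 1%g = 1%:M)
  (ThM : forall x y, N x -> N y -> Th (x * y)%g = Th x *m Th y).
Hypothesis Th_irr : forall k (U : 'M[F]_(k, m)),
  (forall x, N x -> (U *m Th x <= U)%MS) -> \rank U = 0%N \/ \rank U = m.
Local Notation in_span := (in_span N Th).

Lemma span1 : in_span 1%:M.
Proof. by rewrite -Th1; apply: span_mem. Qed.

Lemma span_row_orbit (v : 'rV[F]_m) : v != 0 -> forall y, exists2 A, in_span A & y = v *m A.
Proof.
move=> v_neq0.
pose Q y := exists2 A, in_span A & y = v *m A.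
have [n [U QU]] : exists n (U : 'M[F]_(n, m)), forall y, Q y <-> (y <= U)%MS.
  apply: subspace_rowspace.
  - by exists 0; [apply: span0 | rewrite mulmx0].
  - move=> _ _ [A SA ->] [B SB ->]; exists (A + B); first exact: spanD.
    by rewrite mulmxDr.
  - move=> a _ [A SA ->]; exists (a *: A); first exact: spanZ.
    by rewrite scalemxAr.
have U_inv x : N x -> (U *m Th x <= U)%MS.
  move=> Nx; apply/row_subP => j; rewrite row_mul.
  have [A SA ->] := (proj2 (QU (row j U))) (row_sub j U).
  apply/QU; exists (A *m Th x); last by rewrite mulmxA.
  by apply: spanM => //; apply: span_mem.
have vU : (v <= U)%MS by apply/QU; exists 1%:M; [exact: span1 | rewrite mulmx1].
case: (Th_irr U_inv) => [/eqP|] rkU.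
  move: vU; rewrite mxrank_eq0 in rkU; rewrite (eqP rkU) => /submx0null v0.
  by rewrite v0 eqxx in v_neq0.
by move=> y; apply/QU; apply: submx_full; rewrite /row_full rkU.
Qed.

Lemma span_col_orbit (u : 'cV[F]_m) : u != 0 -> forall z, exists2 A, in_span A & z = A *m u.
Proof.
move=> u_neq0.
pose Q (y : 'rV[F]_m) := exists2 A, in_span A & y = (A *m u)^T.
have [n [U QU]] : exists n (U : 'M[F]_(n, m)), forall y, Q y <-> (y <= U)%MS.
  apply: subspace_rowspace.
  - by exists 0; [apply: span0 | rewrite mul0mx trmx0].
  - move=> _ _ [A SA ->] [B SB ->]; exists (A + B); first exact: spanD.
    by rewrite mulmxDl linearD.
  - move=> a _ [A SA ->]; exists (a *: A); first exact: spanZ.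
    by rewrite -scalemxAl linearZ.
have [fullU|] := boolP (row_full U).
  move=> z; have /QU [A SA eA] : (z^T <= U)%MS by apply: submx_full.
  by exists A; rewrite // -[z]trmxK eA trmxK.
move=> not_fullU; exfalso; move/negP: u_neq0; apply.
set w := nz_row (kermx U^T).
have w_neq0 : w != 0.
  rewrite nz_row_eq0 -mxrank_eq0 mxrank_ker mxrank_tr -lt0n.
  by move: not_fullU; rewrite /row_full; have := rank_leq_col U; lia.
have wU : w *m U^T = 0 by apply/sub_kermxP; apply: nz_row_sub.
have wAu A : in_span A -> w *m A *m u = 0.
  move=> SA; have /QU/submxP [x ex] : Q (A *m u)^T by exists A.
  by rewrite -mulmxA -[A *m u]trmxK ex trmx_mul mulmxA wU mul0mx.
rewrite -[u]mul1mx; apply/eqP/row_matrixP => i; rewrite row_mul row0.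
by have [B SB ->] := span_row_orbit w_neq0 (row i 1%:M); apply: wAu.
Qed.

(* Either [T *m A *m T] is a multiple of [T] for every [A] in the span, which
   confines every [y *m T] to one line, or some eigenvalue [c] of [A *m T] on
   the row space of [T] makes [T *m (A *m T - c)] a nonzero matrix of smaller
   rank. *)
Lemma span_rank_drop T : in_span T -> (1 < \rank T)%N ->
  exists2 T', in_span T' & (0 < \rank T' < \rank T)%N.
Proof.
move=> ST rkT.
have [T_sandwich|/existsPNP [A SA not_scalar]] :=
  pselect (forall A, in_span A -> exists c, T *m A *m T = c *: T).
  exfalso; set w := nz_row T.
  have w_neq0 : w != 0 by rewrite nz_row_eq0 -mxrank_eq0; lia.
  have [x wE] : exists x, w = x *m T by apply/submxP/nz_row_sub.
  have yT_w (y : 'rV_m) : (y *m T <= w)%MS.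
    have [A SA ->] := span_row_orbit w_neq0 y; have [c TAT] := T_sandwich A SA.
    rewrite {1}wE -!mulmxA (mulmxA T) TAT -scalemxAr -wE.
    exact/scalemx_sub/submx_refl.
  have /mxrankS : (T <= w)%MS by apply/row_subP => i; rewrite rowE yT_w.
  by have := rank_leq_row w; lia.
have TAT_neq c : T *m A *m T != c *: T by apply/eqP => e; apply: not_scalar; exists c.
set B := row_base T.
pose Phi := B *m A *m T *m pinvmx B.
have [c [z [z_neq0 zPhi]]] := eigenvector_exists Phi (ltnW rkT).
set w := z *m B.
have w_neq0 : w != 0 by rewrite /w mulmx_free_eq0 // row_base_free.
have wAT : w *m (A *m T) = c *: w.
  have sBAT : (B *m A *m T <= B)%MS.
    by apply: submx_trans (submxMl _ _) _; rewrite eq_row_base.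
  have zPhiB : z *m Phi *m B = z *m (B *m A *m T) by rewrite /Phi -mulmxA mulmxKpV.
  by rewrite /w scalemxAl -zPhi zPhiB !mulmxA.
exists (T *m (A *m T - c%:M)).
  rewrite mulmxBr mul_mx_scalar mulmxA; apply: spanB; last exact: spanZ.
  by apply: spanM => //; apply: spanM.
apply/andP; split.
  by rewrite lt0n mxrank_eq0 mulmxBr mul_mx_scalar mulmxA subr_eq0 TAT_neq.
have w_cap : (w <= T :&: kermx (A *m T - c%:M))%MS.
  rewrite sub_capmx; apply/andP; split.
    by rewrite /w; apply: submx_trans (submxMl _ _) _; rewrite eq_row_base.
  by apply/sub_kermxP; rewrite mulmxBr wAT mul_mx_scalar subrr.
have := mxrank_mul_ker T (A *m T - c%:M).
have : (0 < \rank w)%N by rewrite lt0n mxrank_eq0.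
by have := mxrankS w_cap; lia.
Qed.

Lemma span_rank1 : (0 < m)%N -> exists2 T, in_span T & \rank T = 1%N.
Proof.
move=> m_gt0.
suff min_rank d T : in_span T -> (0 < \rank T <= d)%N ->
    exists2 T', in_span T' & \rank T' = 1%N.
  by apply: (min_rank m 1%:M span1); rewrite mxrank1 m_gt0 leqnn.
elim: d T => [|d IH] T ST rkT; first by lia.
have [rk1|rk_neq1] := eqVneq (\rank T) 1%N; first by exists T.
have [T' ST' rkT'] := span_rank_drop ST (ltac:(lia)).
by apply: (IH T' ST'); lia.
Qed.

Theorem burnside_span : (0 < m)%N -> forall M, in_span M.
Proof.
move=> m_gt0 M; have [T ST rkT] := span_rank1 m_gt0.
set v := nz_row T.
have v_neq0 : v != 0 by rewrite nz_row_eq0 -mxrank_eq0 rkT.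
have Tv : (T <= v)%MS.
  have [_ <-] := mxrank_leqif_sup (nz_row_sub T).
  by rewrite eqn_leq mxrankS ?nz_row_sub // rkT lt0n mxrank_eq0.
have [u Tu] := submxP Tv.
have u_neq0 : u != 0 by apply/eqP => u0; move: rkT; rewrite Tu u0 mul0mx mxrank0.
rewrite (matrix_sum_delta M); apply: span_sum => i; apply: span_sum => k; apply: spanZ.
have [B SB eB] := span_row_orbit v_neq0 (delta_mx 0 k).
have [A SA eA] := span_col_orbit u_neq0 (delta_mx i 0).
have -> : delta_mx i k = A *m T *m B by rewrite Tu mulmxA -eA -mulmxA -eB mul_delta_mx.
by apply: spanM => //; apply: spanM.
Qed.

End Burnside.

Lemma mxtrace_mul_delta (R : comPzRingType) m (X : 'M[R]_m) i j :
  \tr (X *m delta_mx j i) = X i j.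
Proof.
rewrite -[delta_mx j i](mul_delta_mx (0 : 'I_1)) mulmxA mxtrace_mulC -colE -rowE.
by rewrite trace_mx11 !mxE.
Qed.

Lemma unitmx_neq0 (F : fieldType) m (A : 'M[F]_m) : (0 < m)%N -> A \in unitmx -> A != 0.
Proof.
move=> m_gt0 /mxrank_unit rkA; apply/eqP => A0.
by move: m_gt0; rewrite -rkA A0 mxrank0.
Qed.

Lemma trace_lcomb (F : fieldType) (G : groupType) m (Th : G -> 'M[F]_m) s :
  \tr (lcomb Th s) = \sum_(p <- s) p.1 * \tr (Th p.2).
Proof. by rewrite /lcomb linear_sum; apply: eq_bigr => p _; rewrite linearZ. Qed.

Section MatrixCombination.
Variables (F : fieldType) (m : nat) (D : 'I_m -> 'I_m -> 'M[F]_m).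

Definition mxcomb (A : 'M[F]_m) := \sum_i \sum_j A i j *: D i j.

Definition mxcomb_vec (u : 'rV[F]_(m * m)) := mxvec (mxcomb (vec_mx u)).

Lemma mxcomb_vec_is_linear : linear mxcomb_vec.
Proof.
move=> a u v; rewrite /mxcomb_vec [vec_mx _]linearP /=.
suff -> : mxcomb (a *: vec_mx u + vec_mx v) =
          a *: mxcomb (vec_mx u) + mxcomb (vec_mx v) by rewrite linearP.
rewrite /mxcomb scaler_sumr -big_split /=; apply: eq_bigr => i _.
rewrite scaler_sumr -big_split /=; apply: eq_bigr => j _.
by rewrite !mxE scalerDl scalerA.
Qed.

HB.instance Definition _ :=
  GRing.isLinear.Build F 'rV[F]_(m * m) 'rV[F]_(m * m) _ mxcomb_vec mxcomb_vec_is_linear.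

Lemma mxcomb_surj : (forall A, mxcomb A = 0 -> A = 0) -> forall M, exists A, M = mxcomb A.
Proof.
move=> mxcomb_inj M; set L := lin1_mx mxcomb_vec.
have freeL : row_free L.
  rewrite -kermx_eq0; apply/eqP/row_matrixP => i; rewrite row0.
  have : row i (kermx L) *m L = 0 by rewrite -row_mul mulmx_ker row0.
  rewrite mul_rV_lin1 /mxcomb_vec => /eqP; rewrite mxvec_eq0 => /eqP /mxcomb_inj /eqP.
  by rewrite vec_mx_eq0 => /eqP.
have /submxP [x ex] : (mxvec M <= L)%MS.
  by apply: submx_full; rewrite row_full_unit -row_free_unit.
by exists (vec_mx x); apply: (can_inj mxvecK); rewrite ex mul_rV_lin1.
Qed.

Lemma trace_mxcomb_mul A B :
  \tr (mxcomb A *m mxcomb B) =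
  \sum_i \sum_j \sum_k \sum_l A i j * B k l * \tr (D i j *m D k l).
Proof.
rewrite /mxcomb mulmx_suml linear_sum; apply: eq_bigr => i _.
rewrite mulmx_suml linear_sum; apply: eq_bigr => j _.
rewrite mulmx_sumr linear_sum; apply: eq_bigr => k _.
rewrite mulmx_sumr linear_sum; apply: eq_bigr => l _.
by rewrite -scalemxAl -scalemxAr !linearZ /= mulrA mulrC (mulrC (A i j)).
Qed.

End MatrixCombination.

Section SpanSameTrace.
Variables (F : fieldType) (G : groupType) (N : set G) (m : nat) (Th Th' : G -> 'M[F]_m).
Hypotheses (NM : forall x y, N x -> N y -> N (x * y)%g)
  (ThM : forall x y, N x -> N y -> Th (x * y)%g = Th x *m Th y)
  (Th'M : forall x y, N x -> N y -> Th' (x * y)%g = Th' x *m Th' y).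
Hypothesis trace_eq : forall x, N x -> \tr (Th x) = \tr (Th' x).
Hypothesis span_Th : forall M, in_span N Th M.

Lemma trace_lcomb_mul_eq s t : supported N s -> supported N t ->
  \tr (lcomb Th' s *m lcomb Th' t) = \tr (lcomb Th s *m lcomb Th t).
Proof.
move=> Ns Nt; rewrite -(lcomb_prod Th'M Ns Nt) -(lcomb_prod ThM Ns Nt) !trace_lcomb.
by apply: eq_big_seq => p /(supported_prod NM Ns Nt) Np; rewrite trace_eq.
Qed.

(* Transport the matrix units [delta_mx i j] along [lcomb Th s |-> lcomb Th' s]:
   the images have the same trace pairing, hence are linearly independent. *)
Theorem span_same_trace M : in_span N Th' M.
Proof.
have unit_terms i j : {s | supported N s /\ delta_mx i j = lcomb Th s}.
  by apply: cid; have [s Ns ->] := span_Th (delta_mx i j); exists s.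
pose D i j := lcomb Th' (sval (unit_terms i j)).
have trD A B : \tr (mxcomb D A *m mxcomb D B) = \tr (A *m B).
  have -> : \tr (A *m B) = \tr (mxcomb (@delta_mx F m m) A *m mxcomb (@delta_mx F m m) B).
    by rewrite /mxcomb -!matrix_sum_delta.
  rewrite !trace_mxcomb_mul; apply: eq_bigr => i _; apply: eq_bigr => j _.
  apply: eq_bigr => k _; apply: eq_bigr => l _; congr (_ * _).
  case: (svalP (unit_terms i j)) => Ns ->; case: (svalP (unit_terms k l)) => Nt ->.
  exact: trace_lcomb_mul_eq.
have mxcomb_inj A : mxcomb D A = 0 -> A = 0.
  by move=> DA0; apply/matrixP => i j; rewrite -mxtrace_mul_delta -trD DA0 mul0mx mxtrace0 mxE.
have [A ->] := mxcomb_surj mxcomb_inj M.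
apply: span_sum => i; apply: span_sum => j; apply: spanZ.
by exists (sval (unit_terms i j)); [case: (svalP (unit_terms i j)) |].
Qed.

End SpanSameTrace.

Section Twist.
Variables (F : fieldType) (G : groupType) (N K : set G) (m : nat).
Variables (Th Pi : G -> 'M[F]_m) (alpha : G -> G -> F) (lam f thetah : G -> F).
Hypotheses (m_gt0 : (0 < m)%N) (NM : forall x y, N x -> N y -> N (x * y)%g)
  (ThM : forall x y, N x -> N y -> Th (x * y)%g = Th x *m Th y).
Hypothesis span_Th : forall M, in_span N Th M.
Hypotheses (lamM : forall x y, lam (x * y)%g = lam x * lam y)
  (lam_neq0 : forall x, lam x != 0).
Hypothesis lam_fix : forall n, N n -> \tr (Th n) * lam n = \tr (Th n).
Hypotheses (KM : forall x y, K x -> K y -> K (x * y)%g) (NK : N `<=` K).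
Hypotheses (Pi_unit : forall x, K x -> Pi x \in unitmx)
  (PiM : forall x y, K x -> K y -> Pi x *m Pi y = alpha x y *: Pi (x * y)%g)
  (PiN : forall x n, K x -> N n -> Pi (x * n)%g = Pi x *m Th n).
Hypotheses (f_neq0 : forall x, K x -> f x != 0)
  (fN : forall x n, K x -> N n -> f (x * n)%g = f x).
Hypotheses (thetahE : forall x, K x -> thetah x = \tr (Pi x))
  (thetah_lam : forall x, K x -> thetah x * lam x = thetah x * f x).

Lemma trace_pairing_eq0 X : (forall n, N n -> \tr (X *m Th n) = 0) -> X = 0.
Proof.
move=> X_perp.
have trXM M : \tr (X *m M) = 0.
  have [s Ns ->] := span_Th M; rewrite /lcomb mulmx_sumr linear_sum big1_seq //=.
  by move=> p /Ns Np; rewrite -scalemxAr linearZ /= X_perp // mulr0.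
by apply/matrixP => i j; rewrite -mxtrace_mul_delta trXM mxE.
Qed.

Definition twist (s : seq (F * G)) := [seq (p.1 * lam p.2, p.2) | p <- s].

Lemma supported_twist s : supported N s -> supported N (twist s).
Proof. by move=> Ns _ /mapP [p /Ns Np ->]. Qed.

Lemma twist_prod s t : twist (prod_terms s t) = prod_terms (twist s) (twist t).
Proof.
rewrite /twist /prod_terms map_allpairs allpairs_mapl allpairs_mapr.
by apply: eq_allpairs => p q /=; rewrite lamM mulrACA.
Qed.

Lemma trace_twist s n : supported N s -> N n ->
  \tr (lcomb Th (twist s) *m Th n) = (lam n)^-1 * \tr (lcomb Th s *m Th n).
Proof.
move=> Ns Nn; rewrite /lcomb /twist big_map !mulmx_suml !linear_sum mulr_sumr.
apply: eq_big_seq => p /Ns Np; rewrite -!scalemxAl !linearZ /= -ThM //.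
rewrite -[in RHS](lam_fix (NM Np Nn)) lamM.
by field; rewrite lam_neq0.
Qed.

(* [thetah_lam] at [x * n] says [lam x * lam n = f x] unless [\tr (Pi x *m Th n)] vanishes. *)
Lemma trace_Pi_lam x n : K x -> N n ->
  \tr (Pi x *m Th n) * (lam n)^-1 = lam x / f x * \tr (Pi x *m Th n).
Proof.
move=> Kx Nn; have Kxn := KM Kx (NK Nn).
have := thetah_lam Kxn; rewrite thetahE // PiN // fN // lamM.
have [->|tr_neq0] := eqVneq (\tr (Pi x *m Th n)) 0; first by rewrite !(mulr0, mul0r).
rewrite -mulrA => /(mulfI tr_neq0) e; rewrite -e; field.
by have := f_neq0 Kx; rewrite -e mulf_eq0 negb_or => /andP [-> ->].
Qed.

Lemma lcomb_twist_Pi s x c : supported N s -> K x -> lcomb Th s = c *: Pi x ->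
  lcomb Th (twist s) = (c * (lam x / f x)) *: Pi x.
Proof.
move=> Ns Kx sPi; apply/eqP; rewrite -subr_eq0; apply/eqP.
apply: trace_pairing_eq0 => n Nn.
rewrite mulmxBl linearB /= trace_twist // sPi -!scalemxAl !linearZ /=.
by rewrite mulrCA (mulrC (lam n)^-1) trace_Pi_lam // !mulrA subrr.
Qed.

Lemma twist_ratio_morph x y : K x -> K y ->
  lam (x * y)%g / f (x * y)%g = lam x / f x * (lam y / f y).
Proof.
move=> Kx Ky; have Kxy := KM Kx Ky.
have [s Ns Pix] := span_Th (Pi x); have [t Nt Piy] := span_Th (Pi y).
have tw_x := lcomb_twist_Pi Ns Kx (etrans (esym Pix) (esym (scale1r _))).
have tw_y := lcomb_twist_Pi Nt Ky (etrans (esym Piy) (esym (scale1r _))).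
have tw_xy : lcomb Th (twist (prod_terms s t)) =
             (alpha x y * (lam (x * y)%g / f (x * y)%g)) *: Pi (x * y)%g.
  apply: (lcomb_twist_Pi (supported_prod NM Ns Nt) Kxy).
  by rewrite (lcomb_prod ThM Ns Nt) -Pix -Piy PiM.
rewrite twist_prod (lcomb_prod ThM (supported_twist Ns) (supported_twist Nt)) tw_x tw_y in tw_xy.
rewrite -scalemxAl -scalemxAr scalerA PiM // scalerA in tw_xy.
have Pixy_neq0 : Pi (x * y)%g != 0 by apply: unitmx_neq0 => //; apply: Pi_unit.
have alpha_neq0 : alpha x y != 0.
  apply/eqP => alpha0.
  have /(unitmx_neq0 m_gt0) : Pi x *m Pi y \in unitmx by rewrite unitmx_mul !Pi_unit.
  by rewrite PiM // alpha0 scale0r eqxx.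
move/eqP: tw_xy; rewrite -subr_eq0 -scalerBl scaler_eq0 (negPf Pixy_neq0) orbF subr_eq0.
rewrite !mul1r [X in _ == X]mulrC => /eqP e; apply: (mulIf alpha_neq0); rewrite -e.
by rewrite mulrAC.
Qed.

Lemma FK_morph_of_twist x y : K x -> K y -> f (x * y)%g = f x * f y.
Proof.
move=> Kx Ky; have := twist_ratio_morph Kx Ky; rewrite lamM => e.
apply: invr_inj; apply: (mulfI (mulf_neq0 (lam_neq0 x) (lam_neq0 y))).
by rewrite e invfM; ring.
Qed.

End Twist.

Section Characters.
Variable G : TopGroup.type.
Implicit Types (A N K : set G) (h : G -> CC).

Lemma subgroupT : is_subgroup [set: G].
Proof. by split=> //; split. Qed.

Lemma cont_onP A h :
  cont_on A h <-> forall x, A x -> h t @[t --> within A (nbhs x)] --> h x.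
Proof.
split=> [h_cont x Ax|h_cvg x Ax e e_gt0].
  apply/cvgrPdist_lt => e e_gt0; have [U [oU [Ux hU]]] := h_cont x Ax e e_gt0.
  rewrite /within nbhsE /=; exists U; first by split.
  by move=> y Uy Ay; rewrite distrC; apply: hU.
move: (h_cvg x Ax) => /cvgrPdist_lt /(_ e e_gt0).
rewrite /within nbhsE /= => -[U [oU Ux] hU].
by exists U; split=> //; split=> // y Uy Ay; rewrite distrC; apply: hU.
Qed.

Lemma cont_on_eq A h1 h2 :
  (forall x, A x -> h1 x = h2 x) -> cont_on A h1 -> cont_on A h2.
Proof.
move=> h12 h1_cont x Ax e e_gt0; have [U [oU [Ux hU]]] := h1_cont x Ax e e_gt0.
by exists U; split=> //; split=> // y Uy Ay; rewrite -!h12 //; apply: hU.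
Qed.

Lemma cont_onM A h1 h2 :
  cont_on A h1 -> cont_on A h2 -> cont_on A (fun x => h1 x * h2 x).
Proof.
move=> /cont_onP h1_cvg /cont_onP h2_cvg; apply/cont_onP => x Ax.
by apply: cvgM; [apply: h1_cvg | apply: h2_cvg].
Qed.

Lemma cont_onV A h :
  (forall x, A x -> h x != 0) -> cont_on A h -> cont_on A (fun x => (h x)^-1).
Proof.
move=> h_neq0 /cont_onP h_cvg; apply/cont_onP => x Ax.
by apply: cvgV; [apply: h_neq0 | apply: h_cvg].
Qed.

Lemma cont_on_coset_const N K h :
  continuous (fun p : G * G => (p.1 * p.2)%g) -> open N -> N 1%g ->
  (forall x n, K x -> N n -> h (x * n)%g = h x) -> cont_on K h.
Proof.
move=> mul_cont oN N1 hN x Kx e e_gt0.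
have lmul_cont : continuous (fun y : G => (x^-1 * y)%g).
  move=> y; apply: (continuous_comp (f := fun y : G => ((x^-1)%g, y))
                     (g := fun p : G * G => (p.1 * p.2)%g)); last exact: mul_cont.
  by apply: cvg_pair; [apply: cvg_cst | apply: cvg_id].
exists (fun y => N (x^-1 * y)%g); split.
  by apply: (@open_comp _ _ (fun y : G => (x^-1 * y)%g) N) => // y _; apply: lmul_cont.
split; first by rewrite /= mulVg.
by move=> y Ny Ky; rewrite -[y](mulVKg x) hN // subrr normr0.
Qed.

Lemma is_LinP A h : is_subgroup A ->
  is_Lin A h <->
  [/\ h 1%g = 1, forall x y, A x -> A y -> h (x * y)%g = h x * h y & cont_on A h].
Proof.
move=> [A1 [AM _]]; split=> [[Th [[Th1 ThM] Th_cont Th_h]]|[h1 hM h_cont]].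
  have hE x : A x -> h x = Th x 0 0 by move=> Ax; rewrite Th_h // trace_mx11.
  split.
  - by rewrite hE // Th1 mxE eqxx.
  - by move=> x y Ax Ay; rewrite (hE _ (AM _ _ Ax Ay)) !hE // ThM // mxE big_ord1.
  - by apply: (cont_on_eq (fun x Ax => esym (hE x Ax))); apply: Th_cont.
exists (fun x => (h x)%:M); split.
- by split=> [|x y Ax Ay]; rewrite ?h1 // hM // scalar_mxM.
- by move=> i j; rewrite !ord1; apply: (cont_on_eq (h1 := h)) => // x _; rewrite mxE.
- by move=> x _; rewrite mxtrace_scalar.
Qed.

Lemma Lin_neq0 A h : is_subgroup A -> is_Lin A h -> forall x, A x -> h x != 0.
Proof.
move=> sA /(is_LinP _ sA) [h1 hM _] x Ax; have [_ [_ Ainv]] := sA.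
apply/eqP => hx0; have := hM x (x^-1)%g Ax (Ainv x Ax).
by rewrite mulgV h1 hx0 mul0r => /eqP; rewrite oner_eq0.
Qed.

Lemma is_Lin_mul A h1 h2 : is_subgroup A ->
  is_Lin A h1 -> is_Lin A h2 -> is_Lin A (fun x => h1 x * h2 x).
Proof.
move=> sA /(is_LinP _ sA) [h1_1 h1M h1_cont] /(is_LinP _ sA) [h2_1 h2M h2_cont].
apply/is_LinP => //; split; first by rewrite h1_1 h2_1 mulr1.
  by move=> x y Ax Ay; rewrite h1M // h2M // mulrACA.
exact: cont_onM.
Qed.

Lemma is_Lin_inv A h : is_subgroup A -> is_Lin A h -> is_Lin A (fun x => (h x)^-1).
Proof.
move=> sA hLin; have h_neq0 := Lin_neq0 sA hLin.
move/(is_LinP _ sA): hLin => [h1 hM h_cont]; apply/is_LinP => //; split.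
- by rewrite h1 invr1.
- by move=> x y Ax Ay; rewrite hM // invfM.
- exact: cont_onV.
Qed.

Lemma Irr_rep_span N theta m (Th : G -> 'M[CC]_m) :
  is_subgroup N -> is_Irr N theta -> rep_of N Th -> affords N Th theta ->
  (0 < m)%N /\ forall M, in_span N Th M.
Proof.
move=> [N1 [NM _]] [m0 [Th0 [[Th0_1 Th0M] _ [m0_gt0 Th0_irr] Th0_theta]]].
move=> [Th1 ThM] Th_theta.
have m0_m : m0 = m.
  have theta1_m0 : theta 1%g = m0%:R by rewrite Th0_theta // Th0_1 mxtrace1.
  have theta1_m : theta 1%g = m%:R by rewrite Th_theta // Th1 mxtrace1.
  by apply/eqP; rewrite -(eqr_nat CC) -theta1_m0 -theta1_m.
subst m0; split=> // M.
apply: (span_same_trace NM Th0M ThM) => [x Nx|]; first by rewrite -Th0_theta // -Th_theta.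
exact: (burnside_span N1 NM Th0_1 Th0M Th0_irr m0_gt0).
Qed.

Lemma strong_ext_FK_morph N K theta thetah lam f :
  is_subgroup N -> is_Irr N theta -> is_subgroup K -> N `<=` K ->
  strong_ext N K theta thetah ->
  (forall x y, lam (x * y)%g = lam x * lam y) -> (forall x, lam x != 0) ->
  (forall n, N n -> theta n * lam n = theta n) ->
  in_FK N K f -> (forall x, K x -> thetah x * lam x = thetah x * f x) ->
  forall x y, K x -> K y -> f (x * y)%g = f x * f y.
Proof.
move=> sN theta_irr [_ [KM _]] NK [m [Th [Pi [alpha [[Th_rep Th_theta]]]]]].
move=> Pi_unit PiM PiN Pi_thetah lamM lam_neq0 theta_lam [f_neq0 fN] thetah_lam.
have [m_gt0 span_Th] := Irr_rep_span sN theta_irr Th_rep Th_theta.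
have [_ [NM _]] := sN; have [_ ThM] := Th_rep.
have lam_fix n : N n -> \tr (Th n) * lam n = \tr (Th n).
  by move=> Nn; rewrite -Th_theta // theta_lam.
have PiN' x n : K x -> N n -> Pi (x * n)%g = Pi x *m Th n.
  by move=> Kx Nn; case: (PiN x n Kx Nn).
exact: (FK_morph_of_twist m_gt0 NM ThM span_Th lamM lam_neq0 lam_fix KM NK Pi_unit PiM PiN'
  f_neq0 fN Pi_thetah thetah_lam).
Qed.

Lemma FK_Lin_quot N K f :
  continuous (fun p : G * G => (p.1 * p.2)%g) -> open N -> N 1%g -> is_subgroup K ->
  in_FK N K f -> (forall x y, K x -> K y -> f (x * y)%g = f x * f y) ->
  is_Lin_quot N K f.
Proof.
move=> mul_cont oN N1 sK [f_neq0 fN] fM; have [K1 _] := sK.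
have f1 : f 1%g = 1 by apply: (mulfI (f_neq0 _ K1)); rewrite -fM // mulg1 mulr1.
split; last by move=> n Nn; rewrite -[n]mul1g fN.
by apply/is_LinP => //; split=> //; apply: cont_on_coset_const mul_cont oN N1 fN.
Qed.

Lemma Gamma_mul N K thetah nu f lam :
  is_subgroup K -> is_Lin_quot N K f -> is_Lin setT lam ->
  (forall x, K x -> thetah x * lam x = thetah x * f x) ->
  Gamma N K thetah nu -> Gamma N K thetah (fun x => f x * nu x).
Proof.
move=> sK [fLin fN] lamLin thetah_lam [[nuLin nuN] [eps [epsLin thetah_eps]]].
split; first split.
- exact: is_Lin_mul.
- by move=> n Nn; rewrite fN // nuN // mulr1.
exists (fun x => eps x * lam x); split; first exact: is_Lin_mul subgroupT epsLin lamLin.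
by move=> x Kx; rewrite mulrA thetah_eps // mulrAC thetah_lam // -mulrA.
Qed.

Lemma Gamma_coset_sub N K theta thetah psi psi' mu mu' :
  profinite G -> open_normal N -> is_Irr N theta -> is_subgroup K -> N `<=` K ->
  strong_ext N K theta thetah -> is_Lin setT psi -> is_Lin setT psi' ->
  (forall n, N n -> theta n * psi n = theta n * psi' n) ->
  in_FK N K mu -> in_FK N K mu' ->
  (forall x, K x -> thetah x * psi x * mu x = thetah x * psi' x * mu' x) ->
  forall nu, Gamma N K thetah nu -> exists nu', Gamma N K thetah nu' /\
    forall x, K x -> mu x * nu x = mu' x * nu' x.
Proof.
move=> [mul_cont _] [sN [oN _]] theta_irr sK NK theta_ext psiLin psi'Lin theta_psi.
move=> [mu_neq0 muN] [mu'_neq0 mu'N] thetah_psi nu nuGamma.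
pose lam x := psi' x / psi x; pose f x := mu x / mu' x.
have psi_neq0 x : psi x != 0 by apply: (Lin_neq0 subgroupT psiLin).
have lamLin : is_Lin setT lam by apply: is_Lin_mul subgroupT psi'Lin (is_Lin_inv _ psiLin).
have [_ lamM _] := (is_LinP _ subgroupT).1 lamLin.
have theta_lam n : N n -> theta n * lam n = theta n.
  by move=> Nn; rewrite /lam mulrA -theta_psi // mulfK.
have f_FK : in_FK N K f.
  split=> [x Kx|x n Kx Nn]; first by rewrite mulf_neq0 ?invr_eq0 ?mu_neq0 ?mu'_neq0.
  by rewrite /f muN // mu'N.
have thetah_lam x : K x -> thetah x * lam x = thetah x * f x.
  move=> Kx; apply: (mulIf (mulf_neq0 (psi_neq0 x) (mu'_neq0 x Kx))).
  transitivity (thetah x * psi' x * mu' x); first by rewrite /lam; field.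
  by rewrite -thetah_psi // /f; field; rewrite mu'_neq0.
have fM := strong_ext_FK_morph sN theta_irr sK NK theta_ext (fun x y => lamM x y I I)
  (fun x => Lin_neq0 subgroupT lamLin I) theta_lam f_FK thetah_lam.
have fLin := FK_Lin_quot mul_cont oN sN.1 sK f_FK fM.
exists (fun x => f x * nu x); split; first exact: Gamma_mul sK fLin lamLin thetah_lam nuGamma.
by move=> x Kx; rewrite /f; field; rewrite mu'_neq0.
Qed.

End Characters.

Theorem lemma2p8 (G : TopGroup.type) (N L K : set G)
  (theta thetah psi psi' mu mu' : G -> CC) (g : G) :
  profinite G -> open_normal N ->
  is_Irr N theta ->
  is_subgroup L -> N `<=` L -> L `<=` stab_twist N theta ->
  is_subgroup K -> N `<=` K -> K `<=` stab N theta ->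
  (forall l, L l -> forall x, K x <-> K (conjg' x l)) ->
  strong_ext N K theta thetah ->
  L g ->
  is_Lin setT psi -> is_Lin setT psi' ->
  (forall n, N n -> theta (conjg' n g) = theta n * psi n) ->
  (forall n, N n -> theta n * psi n = theta n * psi' n) ->
  in_FK N K mu -> in_FK N K mu' ->
  (forall x, K x -> thetah (conjg' x g) = thetah x * psi x * mu x) ->
  (forall x, K x -> thetah x * psi x * mu x = thetah x * psi' x * mu' x) ->
  (* mu Gamma = mu' Gamma as cosets in F_K (elements compared on K) *)
  (forall nu, Gamma N K thetah nu -> exists nu', Gamma N K thetah nu' /\
     forall x, K x -> mu x * nu x = mu' x * nu' x) /\
  (forall nu', Gamma N K thetah nu' -> exists nu, Gamma N K thetah nu /\
     forall x, K x -> mu x * nu x = mu' x * nu' x).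
Proof.
(* Only the equalities relating [psi, mu] to [psi', mu'] matter: [g], [L] and the
   stabiliser hypotheses just guarantee that such data exist. *)
move=> G_prof N_open theta_irr _ _ _ sK NK _ _ theta_ext _ psiLin psi'Lin _ theta_psi.
move=> mu_FK mu'_FK _ thetah_psi; split.
  exact: (Gamma_coset_sub G_prof N_open theta_irr sK NK theta_ext psiLin psi'Lin
    theta_psi mu_FK mu'_FK thetah_psi).
move=> nu' nu'Gamma.
have [nu [nuGamma e]] := Gamma_coset_sub G_prof N_open theta_irr sK NK theta_ext
  psi'Lin psiLin (fun n Nn => esym (theta_psi n Nn)) mu'_FK mu_FK
  (fun x Kx => esym (thetah_psi x Kx)) nu'Gamma.
by exists nu; split=> // x Kx; rewrite e.
Qed.
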